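(* For the unit-sum normalization, there is an absolute constant $C>0$ such that for every $n\ge1$ and every ordinal mechanism $J$ (deterministic or randomized, not necessarily truthful) on $n$ agents and $n$ items, $ar(J)\le C/\sqrt n$.
   Context: Agents $N=\{1,\dots,n\}$, items $M=\{1,\dots,n\}$, outcomes are bijections $\mu$ ($O$ the set of outcomes). Unit-sum valuation functions: injective $u_i:M\to\mathbb R_{\ge0}$ with $\sum_j u_i(j)=1$; $V^n$ the set of profiles. A mechanism maps each profile to a distribution over $O$; it is ordinal if its output distribution is unchanged when any one agent's valuation function is replaced by another inducing the same ordering of the items. $ar(J)=\inf_{\mathbf u\in V^n}\mathbb E[\sum_i u_i(J(\mathbf u)_i)]/\max_{\mu\in O}\sum_i u_i(\mu_i)$. *)

From Stdlib Require Import Reals.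
From mathcomp Require Import all_boot perm.
Set Implicit Arguments. Unset Strict Implicit. Unset Printing Implicit Defensive.

Open Scope R_scope.

(* Agents and items are both 'I_n; outcomes are bijections agent -> item. *)
Definition agent n := 'I_n.
Definition item n := 'I_n.
Definition outcome n := {perm 'I_n}.

(* A profile of valuation functions: u i j = value of agent i for item j. *)
Definition profile n := 'I_n -> 'I_n -> R.

Definition Rsumf (T : finType) (f : T -> R) : R :=
  foldr Rplus 0 (map f (enum T)).

Definition Rmaxf (T : finType) (f : T -> R) : R :=
  foldr Rmax 0 (map f (enum T)).

Definition unit_sum_val n (v : 'I_n -> R) : Prop :=
  injective v /\ (forall j, 0 <= v j) /\ Rsumf v = 1.

Definition valid_profile n (u : profile n) : Prop :=
  forall i, unit_sum_val (u i).

Definition mechanism n := profile n -> outcome n -> R.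

Definition is_distribution n (p : outcome n -> R) : Prop :=
  (forall mu, 0 <= p mu) /\ Rsumf p = 1.

Definition is_mechanism n (J : mechanism n) : Prop :=
  forall u, valid_profile u -> is_distribution (J u).

Definition same_ordering n (v w : 'I_n -> R) : Prop :=
  forall j k, v j < v k <-> w j < w k.

Definition ordinal_mech n (J : mechanism n) : Prop :=
  forall (u u' : profile n) (i : 'I_n),
    valid_profile u -> valid_profile u' ->
    (forall k, k <> i -> u' k = u k) ->
    same_ordering (u i) (u' i) ->
    J u = J u'.

Definition welfare n (u : profile n) (mu : outcome n) : R :=
  Rsumf (fun i : 'I_n => u i (mu i)).

Definition exp_welfare n (J : mechanism n) (u : profile n) : R :=
  Rsumf (fun mu : outcome n => J u mu * welfare u mu).

Definition opt_welfare n (u : profile n) : R :=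
  Rmaxf (fun mu : outcome n => welfare u mu).

(* ar(J) <= c, written out: the infimum over V^n of the ratio is at most c *)
Definition ar_le n (J : mechanism n) (c : R) : Prop :=
  forall eps, 0 < eps ->
    exists u : profile n, valid_profile u /\
      exp_welfare J u / opt_welfare u < c + eps.

(* Let k = floor (sqrt n).  Agents g + k m (g, m < k) form block g and rank item g
   first, with a flat valuation (all values at most 3/n); the remaining agents
   rank item 0 first.  The k agents of block g share item g, so one of them, a_g,
   receives it with probability at most 1/k.  Moving half of the mass of each a_g
   onto its top item changes no ordering, so an ordinal mechanism keeps its
   lottery: its expected welfare stays at most 3 + k (1/k) = 4, whereas giving
   every a_g its top item yields welfare at least k/2.  Hence
   ar(J) <= 8/k <= 16/sqrt n. *)

From Stdlib Require Import Reals Lra.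
From Stdlib Require Import FunctionalExtensionality Classical.
From mathcomp Require Import all_boot perm zify.
From HB Require Import structures.
Set Implicit Arguments. Unset Strict Implicit. Unset Printing Implicit Defensive.
Open Scope R_scope.

HB.instance Definition _ := Monoid.isComLaw.Build R 0 Rplus
  (fun x y z => esym (Rplus_assoc x y z)) Rplus_comm Rplus_0_l.

Local Notation "\sum_ ( i : t | P ) F" := (\big[Rplus/0]_(i : t | P) F) : R_scope.
Local Notation "\sum_ ( i : t ) F" := (\big[Rplus/0]_(i : t) F) : R_scope.
Local Notation "\sum_ ( i < n ) F" := (\big[Rplus/0]_(i < n) F) : R_scope.

Local Notation indicator b := (if b then 1 else 0).

Section RealSums.
Variable T : finType.
Implicit Types (f g : T -> R) (P : pred T).

Lemma RsumfE f : Rsumf f = \sum_(i : T) f i.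
Proof. by rewrite /Rsumf foldrE big_map big_enum. Qed.

Lemma le_Rmaxf f x : f x <= Rmaxf f.
Proof.
rewrite /Rmaxf; have : x \in enum T by rewrite mem_enum.
elim: (enum T) => //= y s IHs; rewrite inE => /orP [/eqP <- | /IHs fx_le].
- exact: Rmax_l.
- exact: Rle_trans fx_le (Rmax_r _ _).
Qed.

Lemma ler_sumR f g : (forall i, f i <= g i) -> \sum_(i : T) f i <= \sum_(i : T) g i.
Proof. by move=> le_fg; apply: (big_ind2 Rle) => *; [lra | lra | exact: le_fg]. Qed.

Lemma sumR_ge0 P f : (forall i, 0 <= f i) -> 0 <= \sum_(i : T | P i) f i.
Proof. by move=> f_ge0; apply: (big_ind (Rle 0)) => *; [lra | lra | exact: f_ge0]. Qed.

Lemma mulR_sumr c f : \sum_(i : T) c * f i = c * \sum_(i : T) f i.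
Proof. by apply: (big_ind2 (fun x y => x = c * y)) => [|? ? ? ? -> ->|]; [ring | ring | ]. Qed.

Lemma sumR_delta a f : \sum_(i : T) (if i == a then f i else 0) = f a.
Proof. by rewrite (bigD1 a) //= eqxx big1 => [|i /negbTE ->]; [ring | ]. Qed.

Lemma sumR_indicator_le P c : 0 <= c -> (forall x y, P x -> P y -> x = y) ->
  \sum_(i : T) (if P i then c else 0) <= c.
Proof.
move=> c_ge0 P_uniq; case: (pickP P) => [x Px | P0].
- rewrite (bigD1 x) //= Px big1 => [|y]; first lra.
  by case: ifP => // Py /eqP[]; apply: P_uniq.
- by rewrite big1 => [|y _]; [lra | rewrite P0].
Qed.

End RealSums.

Lemma sumR_const_ord k c : \sum_(i < k) c = INR k * c.
Proof.
rewrite big_const_ord; elim: k => [|k IHk]; first by rewrite /=; ring.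
by rewrite iterS IHk S_INR; ring.
Qed.

Lemma sumR_gt0 k (f : 'I_k -> R) : (0 < k)%N -> (forall i, 0 < f i) ->
  0 < \sum_(i < k) f i.
Proof.
case: k f => [//|k] f _ f_gt0; rewrite big_ord_recl.
apply: Rplus_lt_le_0_compat; first exact: f_gt0.
by apply: sumR_ge0 => i; apply: Rlt_le.
Qed.

Lemma exists_le_average k (f : 'I_k -> R) : (0 < k)%N ->
  exists m, f m <= (\sum_(i < k) f i) / INR k.
Proof.
move=> k_gt0; have k_gt0R : 0 < INR k by apply/lt_0_INR/ltP.
apply: NNPP => no_small.
have above (i : 'I_k) : 0 < f i - (\sum_(i < k) f i) / INR k.
  by have /Rnot_le_lt := not_ex_all_not _ _ no_small i; lra.
have := sumR_gt0 k_gt0 above; rewrite /Rminus big_split sumR_const_ord /=.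
set S := \sum_(i < k) f i.
have -> : INR k * - (S / INR k) = - S by field; lra.
lra.
Qed.

Lemma Rdiv_le_cross a b c d : 0 < c -> 0 < d -> a * d <= b * c -> a / c <= b / d.
Proof.
move=> c_gt0 d_gt0 le_cross; apply: (Rmult_le_reg_l (c * d)); first nra.
have -> : c * d * (a / c) = a * d by field; lra.
by have -> : c * d * (b / d) = b * c by field; lra.
Qed.

(* Agents are switched one at a time, each switch being allowed by ordinality. *)
Lemma ordinal_mech_same_ordering n (J : mechanism n) (u u' : profile n) :
  ordinal_mech J -> valid_profile u -> valid_profile u' ->
  (forall i, same_ordering (u i) (u' i)) -> J u = J u'.
Proof.
move=> J_ord u_valid u'_valid same_uu'.
pose w (m : nat) : profile n := fun i => if (i < m)%N then u' i else u i.
have w_valid m : valid_profile (w m) by move=> i; rewrite /w; case: ifP.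
have w_step m : J (w m) = J (w m.+1).
  case: (ltnP m n) => [lt_mn | le_nm].
  - apply: (J_ord _ _ (Ordinal lt_mn)) => // [i ne_i|].
      have ne_im : (nat_of_ord i == m) = false by apply/eqP => e; apply/ne_i/val_inj.
      by rewrite /w ltnS leq_eqVlt ne_im.
    by rewrite /w /= ltnn ltnSn; apply: same_uu'.
  - congr J; apply: functional_extensionality => i; rewrite /w.
    have lt_im : (i < m)%N := leq_trans (ltn_ord i) le_nm.
    by rewrite lt_im ltnS (ltnW lt_im).
have w_const m : J u = J (w m).
  elim: m => [|m ->]; last exact: w_step.
  by congr J; apply: functional_extensionality.
rewrite (w_const n); congr J; apply: functional_extensionality => i.
by rewrite /w ltn_ord.
Qed.

Lemma perm_extend_inj n k (a b : 'I_k -> 'I_n) : injective a -> injective b ->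
  exists mu : {perm 'I_n}, forall g, mu (a g) = b g.
Proof.
move=> a_inj b_inj.
suff ext_upto m : (m <= k)%N ->
    exists mu : {perm 'I_n}, forall g : 'I_k, (g < m)%N -> mu (a g) = b g.
  by have [mu mu_ab] := ext_upto k (leqnn k); exists mu => g; apply: mu_ab.
elim: m => [|m IHm] le_mk; first by exists 1%g.
have [mu mu_ab] := IHm (ltnW le_mk); pose gm := Ordinal le_mk.
exists (mu * tperm (mu (a gm)) (b gm))%g => g; rewrite ltnS leq_eqVlt permM.
case: (g =P gm) => [-> _|ne_g /orP[/eqP e|lt_gm]]; first by rewrite tpermL.
  by case: ne_g; apply: val_inj.
rewrite (mu_ab _ lt_gm) tpermD //.
- by apply/eqP; rewrite -(mu_ab _ lt_gm) => /perm_inj/a_inj e; apply: ne_g.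
- by apply/eqP => /b_inj e; apply: ne_g.
Qed.

Definition assign_prob n (p : outcome n -> R) (i j : 'I_n) : R :=
  \sum_(mu : {perm 'I_n}) p mu * indicator (mu i == j).

Section Assignments.
Variables (n k : nat) (p : outcome n -> R).
Hypothesis p_distr : is_distribution p.

Lemma sum_assign_prob_le1 (a : 'I_k -> 'I_n) j : injective a ->
  \sum_(g < k) assign_prob p (a g) j <= 1.
Proof.
move=> a_inj; have [p_ge0 p_sum1] := p_distr; rewrite RsumfE in p_sum1.
rewrite /assign_prob exchange_big /= -[X in _ <= X]p_sum1; apply: ler_sumR => mu.
rewrite mulR_sumr -[X in _ <= X]Rmult_1_r; apply: Rmult_le_compat_l => //.
apply: (sumR_indicator_le (P := fun g => mu (a g) == j)) => [|g g' /eqP e /eqP e'].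
  lra.
by apply/a_inj/(@perm_inj _ mu); rewrite e e'.
Qed.

Lemma expect_le_hits (w : outcome n -> R) c (a b : 'I_k -> 'I_n) :
  (forall mu, w mu <= c + \sum_(g < k) indicator (mu (a g) == b g)) ->
  \sum_(mu : {perm 'I_n}) p mu * w mu <= c + \sum_(g < k) assign_prob p (a g) (b g).
Proof.
move=> w_le; have [p_ge0 p_sum1] := p_distr; rewrite RsumfE in p_sum1.
apply: (Rle_trans _ (\sum_(mu : {perm 'I_n})
    (c * p mu + \sum_(g < k) p mu * indicator (mu (a g) == b g)))).
  apply: ler_sumR => mu; rewrite mulR_sumr (Rmult_comm c) -Rmult_plus_distr_l.
  exact: Rmult_le_compat_l.
by rewrite big_split /= mulR_sumr p_sum1 exchange_big /= Rmult_1_r; apply: Rle_refl.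
Qed.

End Assignments.

Lemma welfare_le_hits n k (u : profile n) (a b : 'I_k -> 'I_n) c (mu : outcome n) :
  (0 < n)%N ->
  (forall i j, u i j <= c / INR n + \sum_(g < k) indicator ((i == a g) && (j == b g))) ->
  welfare u mu <= c + \sum_(g < k) indicator (mu (a g) == b g).
Proof.
move=> n_gt0 u_le; rewrite /welfare RsumfE.
apply: (Rle_trans _ _ _ (ler_sumR (fun i => u_le i (mu i)))).
rewrite big_split /= sumR_const_ord exchange_big /=.
have -> : INR n * (c / INR n) = c by field; apply/not_0_INR/eqP; rewrite -lt0n.
apply/Rplus_le_compat_l/Req_le/eq_bigr => g _.
rewrite -[RHS](sumR_delta _ (fun i => indicator (mu i == b g))).
by apply: eq_bigr => i _; case: (i =P a g) => [->|].
Qed.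

Lemma sum_agents_le_welfare n k (u : profile n) (a : 'I_k -> 'I_n) (mu : outcome n) :
  injective a ->
  (forall i j, 0 <= u i j) -> \sum_(g < k) u (a g) (mu (a g)) <= welfare u mu.
Proof.
move=> a_inj u_ge0; rewrite /welfare RsumfE.
rewrite (eq_bigr (fun g => \sum_(i : 'I_n) if i == a g then u i (mu i) else 0)); last first.
  by move=> g _; rewrite (sumR_delta _ (fun i => u i (mu i))).
rewrite exchange_big /=; apply: ler_sumR => i.
apply: (sumR_indicator_le (P := fun g => i == a g)) => [|g g' /eqP e /eqP e'].
  exact: u_ge0.
by apply: a_inj; rewrite -e -e'.
Qed.

Section FlatValuation.
Variable n : nat.
Hypothesis n_gt0 : (0 < n)%N.

(* Weights are pairwise distinct, lie in [n, 3n] and peak at [t]; hence after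
   normalisation every value is at most [3/n]. *)
Definition flat_weight (t j : 'I_n) : R := INR n + INR j + (if j == t then INR n else 0).

Definition flat_val (t j : 'I_n) : R := flat_weight t j / \sum_(l : 'I_n) flat_weight t l.

Let n_gt0R : 0 < INR n. Proof. exact/lt_0_INR/ltP. Qed.

Let INR_ord_bounds (j : 'I_n) : 0 <= INR j < INR n.
Proof. by split; [apply: pos_INR | apply/lt_INR/ltP]. Qed.

Lemma flat_weight_bounds t j : INR n <= flat_weight t j <= 3 * INR n.
Proof. by rewrite /flat_weight; have := INR_ord_bounds j; case: (j == t); lra. Qed.

Lemma flat_weight_sum_ge t : INR n * INR n <= \sum_(l : 'I_n) flat_weight t l.
Proof.
rewrite -sumR_const_ord; apply: ler_sumR => j.
by have [] := flat_weight_bounds t j.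
Qed.

Let flat_weight_sum_gt0 t : 0 < \sum_(l : 'I_n) flat_weight t l.
Proof. by have := flat_weight_sum_ge t; nra. Qed.

Lemma flat_val_ge0 t j : 0 <= flat_val t j.
Proof.
apply: Rle_mult_inv_pos => //.
by have [] := flat_weight_bounds t j; lra.
Qed.

Lemma flat_val_le t j : flat_val t j <= 3 / INR n.
Proof.
apply: Rdiv_le_cross => //.
have [_ w_le] := flat_weight_bounds t j; have := flat_weight_sum_ge t.
have : flat_weight t j * INR n <= 3 * INR n * INR n by apply: Rmult_le_compat_r; lra.
lra.
Qed.

Lemma flat_val_top t j : j != t -> flat_val t j < flat_val t t.
Proof.
move=> ne_jt; apply: Rmult_lt_compat_r; first exact: Rinv_0_lt_compat.
rewrite /flat_weight eqxx (negbTE ne_jt).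
by have := INR_ord_bounds j; have := INR_ord_bounds t; lra.
Qed.

Lemma flat_weight_inj t : injective (flat_weight t).
Proof.
move=> j j'; rewrite /flat_weight.
have := INR_ord_bounds j; have := INR_ord_bounds j'; have := INR_ord_bounds t.
case: (j =P t) => [->|_]; case: (j' =P t) => [->|_] // *.
- by exfalso; lra.
- by exfalso; lra.
- by apply/ord_inj/INR_eq; lra.
Qed.

Lemma flat_val_unit_sum t : unit_sum_val (flat_val t).
Proof.
split; [|split; [exact: flat_val_ge0 |]].
- move=> j j' eq_v; apply: (@flat_weight_inj t).
  apply: (Rmult_eq_reg_r (/ \sum_(l : 'I_n) flat_weight t l)); first exact: eq_v.
  exact/Rinv_neq_0_compat/Rgt_not_eq.
- rewrite RsumfE (eq_bigr (fun j => / (\sum_(l : 'I_n) flat_weight t l) * flat_weight t j)).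
    by rewrite mulR_sumr Rinv_l //; apply: Rgt_not_eq.
  by move=> j _; rewrite /flat_val /Rdiv Rmult_comm.
Qed.

End FlatValuation.

Lemma same_ordering_inj n (v w : 'I_n -> R) :
  same_ordering v w -> injective v -> injective w.
Proof.
move=> same_vw v_inj j l eq_w; apply: v_inj.
have [/same_vw|[//|/same_vw]] := Rtotal_order (v j) (v l);
  by rewrite eq_w => /Rlt_irrefl.
Qed.

Definition peak_val n (v : 'I_n -> R) (t j : 'I_n) : R :=
  v j / 2 + (if j == t then /2 else 0).

Section PeakValuation.
Variables (n : nat) (v : 'I_n -> R) (t : 'I_n).
Hypotheses (v_unit : unit_sum_val v) (v_top : forall j, j != t -> v j < v t).

Lemma peak_val_top : /2 <= peak_val v t t.
Proof. by have [_ [v_ge0 _]] := v_unit; rewrite /peak_val eqxx; have := v_ge0 t; lra. Qed.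

Lemma peak_val_le j : peak_val v t j <= v j + indicator (j == t).
Proof.
by have [_ [v_ge0 _]] := v_unit; rewrite /peak_val; have := v_ge0 j; case: (j == t); lra.
Qed.

Lemma same_ordering_peak_val : same_ordering v (peak_val v t).
Proof.
move=> j l; rewrite /peak_val.
case: (j =P t) => [->|/eqP ne_jt]; case: (l =P t) => [->|/eqP ne_lt].
- by split; lra.
- by have := v_top ne_lt; split; lra.
- by have := v_top ne_jt; split; lra.
- by split; lra.
Qed.

Lemma peak_val_unit_sum : unit_sum_val (peak_val v t).
Proof.
have [v_inj [v_ge0 v_sum1]] := v_unit.
split; [|split].
- exact: same_ordering_inj same_ordering_peak_val v_inj.
- by move=> j; rewrite /peak_val; have := v_ge0 j; case: (j == t); lra.
- rewrite RsumfE in v_sum1; rewrite RsumfE /peak_val big_split /= (sumR_delta _ (fun=> /2)).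
  rewrite (eq_bigr (fun j => /2 * v j)); last by move=> j _; rewrite /Rdiv Rmult_comm.
  by rewrite mulR_sumr v_sum1; field.
Qed.

End PeakValuation.

Section PeakedProfile.
Variables (n k : nat) (J : mechanism n) (u : profile n) (top : 'I_n -> 'I_n).
Variables (a : 'I_k -> 'I_n) (c : R).
Hypotheses (n_gt0 : (0 < n)%N) (J_mech : is_mechanism J) (J_ord : ordinal_mech J).
Hypotheses (u_valid : valid_profile u) (u_top : forall i j, j != top i -> u i j < u i (top i)).
Hypotheses (u_le : forall i j, u i j <= c / INR n).
Hypotheses (a_inj : injective a) (top_a_inj : injective (top \o a)).

Definition peaked_profile : profile n :=
  fun i => if [exists g, i == a g] then peak_val (u i) (top i) else u i.

Lemma peaked_profile_valid : valid_profile peaked_profile.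
Proof.
move=> i; rewrite /peaked_profile; case: ifP => _; last exact: u_valid.
exact: peak_val_unit_sum (u_top (i := i)).
Qed.

Lemma mech_peaked_profile : J peaked_profile = J u.
Proof.
apply/esym/ordinal_mech_same_ordering => // [|i]; first exact: peaked_profile_valid.
rewrite /peaked_profile; case: ifP => _; last by split.
exact: same_ordering_peak_val (u_top (i := i)).
Qed.

Lemma peaked_profile_le i j : peaked_profile i j <=
  c / INR n + \sum_(g < k) indicator ((i == a g) && (j == top (a g))).
Proof.
rewrite /peaked_profile; case: ifP => [/existsP[g0 /eqP->] | _]; last first.
  apply: (Rle_trans _ _ _ (u_le i j)); rewrite -[X in X <= _]Rplus_0_r.
  by apply/Rplus_le_compat_l/sumR_ge0 => g; case: ifP => _; lra.
apply: (Rle_trans _ _ _ (peak_val_le (top (a g0)) (u_valid _) j)).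
rewrite (eq_bigr (fun g => if g == g0 then indicator (j == top (a g)) else 0)).
  by rewrite sumR_delta; apply/Rplus_le_compat_r/u_le.
by move=> g _; rewrite (inj_eq a_inj) eq_sym; case: eqP => [->|].
Qed.

Lemma exp_welfare_peaked_le :
  exp_welfare J peaked_profile <= c + \sum_(g < k) assign_prob (J u) (a g) (top (a g)).
Proof.
rewrite /exp_welfare RsumfE mech_peaked_profile.
apply: (expect_le_hits (J_mech u_valid) (b := top \o a)) => mu.
exact: (welfare_le_hits (b := top \o a) _ n_gt0 peaked_profile_le).
Qed.

Lemma opt_welfare_peaked_ge : INR k / 2 <= opt_welfare peaked_profile.
Proof.
have [mu mu_a] := perm_extend_inj a_inj top_a_inj.
apply: (Rle_trans _ (welfare peaked_profile mu)); last exact: le_Rmaxf.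
have peaked_ge0 i j : 0 <= peaked_profile i j by have [_ []] := peaked_profile_valid i.
apply: Rle_trans (sum_agents_le_welfare mu a_inj peaked_ge0).
rewrite /Rdiv -sumR_const_ord; apply: ler_sumR => g.
rewrite mu_a /peaked_profile; case: existsP => [_ | []]; last by exists g.
exact: peak_val_top (u_valid _).
Qed.

End PeakedProfile.

Section Blocks.
Variables (n k : nat).
Hypotheses (k_gt0 : (0 < k)%N) (kk_le_n : (k * k <= n.+1)%N).

Definition block_agent (g m : 'I_k) : 'I_n.+1 := inord (g + k * m).

Definition block_top (i : 'I_n.+1) : 'I_n.+1 := inord (if (i < k * k)%N then i %% k else 0%N).

Let block_agent_lt (g m : 'I_k) : (g + k * m < k * k)%N.
Proof. by have := ltn_ord g; have := ltn_ord m; nia. Qed.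

Let block_agent_val g m : block_agent g m = (g + k * m)%N :> nat.
Proof. by rewrite inordK // (leq_trans (block_agent_lt g m)). Qed.

Lemma block_top_agent g m : block_top (block_agent g m) = inord g.
Proof.
rewrite /block_top block_agent_val block_agent_lt.
by rewrite addnC mulnC modnMDl modn_small.
Qed.

Lemma block_agent_inj g : injective (block_agent g).
Proof.
move=> m m' /(congr1 val); rewrite /= !block_agent_val => /addnI/eqP.
by rewrite eqn_pmul2l // => /eqP/val_inj.
Qed.

Lemma inord_ord_inj : injective (fun g : 'I_k => inord g : 'I_n.+1).
Proof.
have le_kn : (k <= n.+1)%N by apply: leq_trans kk_le_n; apply: leq_pmulr.
move=> g g' /(congr1 val); rewrite /= !inordK ?(leq_trans (ltn_ord _) le_kn) //.
exact: val_inj.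
Qed.

(* The [k] agents of a block are all after the block's top item, so their
   probabilities of getting it sum to at most 1. *)
Lemma exists_unlikely_block_agents (p : outcome n.+1 -> R) : is_distribution p ->
  exists a : 'I_k -> 'I_n.+1, [/\ injective a, forall g, block_top (a g) = inord g
    & forall g, assign_prob p (a g) (block_top (a g)) <= / INR k].
Proof.
move=> p_distr; have k_gt0R : 0 < INR k by apply/lt_0_INR/ltP.
have unlikely g : exists m, assign_prob p (block_agent g m) (inord g) <= / INR k.
  have [m le_avg] := exists_le_average (fun m => assign_prob p (block_agent g m) (inord g)) k_gt0.
  exists m; apply: (Rle_trans _ _ _ le_avg); rewrite /Rdiv -[X in _ <= X]Rmult_1_l.
  apply/Rmult_le_compat_r; first exact/Rlt_le/Rinv_0_lt_compat.
  exact: sum_assign_prob_le1 (@block_agent_inj g).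
have [sel sel_unlikely] := fin_all_exists unlikely.
have top_sel g : block_top (block_agent g (sel g)) = inord g by apply: block_top_agent.
exists (fun g => block_agent g (sel g)); split => // [g g' eq_a|g].
  by apply: inord_ord_inj; rewrite /= -!top_sel eq_a.
by rewrite top_sel.
Qed.

End Blocks.

Lemma ordinal_mech_hard_profile n k (J : mechanism n.+1) :
  (0 < k)%N -> (k * k <= n.+1)%N -> is_mechanism J -> ordinal_mech J ->
  exists u, [/\ valid_profile u, exp_welfare J u <= 4 & INR k / 2 <= opt_welfare u].
Proof.
move=> k_gt0 kk_le_n J_mech J_ord; have k_gt0R : 0 < INR k by apply/lt_0_INR/ltP.
pose u : profile n.+1 := fun i => flat_val (block_top k i).
have u_valid : valid_profile u by move=> i; apply: flat_val_unit_sum.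
have u_top i j : j != block_top k i -> u i j < u i (block_top k i) by apply: flat_val_top.
have u_le i j : u i j <= 3 / INR n.+1 by apply: flat_val_le.
have [a [a_inj top_a unlikely]] := exists_unlikely_block_agents k_gt0 kk_le_n (J_mech _ u_valid).
have top_a_inj : injective (block_top k \o a).
  by move=> g g' /=; rewrite !top_a => /(inord_ord_inj k_gt0 kk_le_n).
exists (peaked_profile u (block_top k) a); split.
- exact: peaked_profile_valid.
- apply: Rle_trans (exp_welfare_peaked_le _ J_mech J_ord u_valid u_top u_le a_inj) _ => //.
  apply: Rle_trans (Rplus_le_compat_l 3 _ _ (ler_sumR unlikely)) _.
  by rewrite sumR_const_ord Rinv_r; [lra | apply: Rgt_not_eq].
- exact: opt_welfare_peaked_ge.
Qed.

Lemma sqrt_le_twice_isqrt n : (0 < n)%N -> sqrt (INR n) <= 2 * INR (Nat.sqrt n).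
Proof.
move=> /ltP n_gt0; have [_ /le_INR lt_n] := Nat.sqrt_spec n (Nat.le_0_l _).
have /le_INR s_ge1 : (1 <= Nat.sqrt n)%coq_nat := Nat.sqrt_le_mono 1 n n_gt0.
rewrite /= in s_ge1; rewrite -(sqrt_square (2 * INR (Nat.sqrt n))); last lra.
by apply: sqrt_le_1_alt; move: lt_n; rewrite S_INR mult_INR !S_INR /=; nra.
Qed.

Theorem lemma8 :
  exists C : R, 0 < C /\
    forall (n : nat), (1 <= n)%nat ->
    forall J : mechanism n, is_mechanism J -> ordinal_mech J ->
      ar_le J (C / sqrt (INR n)).
Proof.
exists 16; split; first lra.
case=> [|n] // _ J J_mech J_ord eps eps_gt0.
have [k_sq_le _] := Nat.sqrt_spec n.+1 (Nat.le_0_l _); set k := Nat.sqrt n.+1 in k_sq_le *.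
have k_gt0 : (0 < k)%N by apply/ltP/(Nat.sqrt_le_mono 1)/le_n_S/Nat.le_0_l.
have kk_le_n : (k * k <= n.+1)%N by apply/leP.
have [u [u_valid exp_le opt_ge]] := ordinal_mech_hard_profile k_gt0 kk_le_n J_mech J_ord.
exists u; split => //.
have k_ge1 : 1 <= INR k by apply: (le_INR 1); apply/leP.
have sqrt_gt0 : 0 < sqrt (INR n.+1) by apply/sqrt_lt_R0/lt_0_INR/Nat.lt_0_succ.
have := sqrt_le_twice_isqrt (ltn0Sn n); rewrite -/k => sqrt_le.
apply: (Rle_lt_trans _ (4 / opt_welfare u)).
  by apply: Rmult_le_compat_r => //; apply/Rlt_le/Rinv_0_lt_compat; lra.
apply: (Rle_lt_trans _ (16 / sqrt (INR n.+1))); last lra.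
by apply: Rdiv_le_cross; lra.
Qed.
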